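(* Let $\{\mathbf{x}^k\}$ be generated by FLEXA in the setting of either (A) conditions (i)–(iv) below with the bounded step-size or line-search rule, or (B) conditions (i)–(iii) below with the diminishing step-size rule. Then (almost surely under the random-based selection rule) (a) $\sum_{k=0}^\infty\gamma^k\|\widehat{\mathbf{z}}^k-\mathbf{x}^k\|^2<\infty$, and (b) $\lim_{k\to\infty}\|\mathbf{x}^{k+1}-\mathbf{x}^k\|=0$.
   Context: Problem: minimize $V(\mathbf{x})\triangleq F(\mathbf{x})+G(\mathbf{x})$ over $X=X_1\times\cdots\times X_n$, each $X_i\subseteq\mathbb{R}^{m_i}$ nonempty closed convex; $F:O\to\mathbb{R}$ is $C^1$ on an open $O\supseteq X$ with $\nabla F$ $L$-Lipschitz on $X$; $G:O\to\mathbb{R}$ convex; $V$ bounded below on $X$. $N=\{1,\dots,n\}$; $\mathbf{x}_{-i}$, $(\mathbf{x}_i,\mathbf{y}_{-i})$ denote the usual block notation; $O_i\supseteq X_i$ open, $O=\prod O_i$. ''$G$ block-separable'' means $G(\mathbf{x})=\sum_i g_i(\mathbf{x}_i)$ with $g_i$ convex. Surrogates $\widetilde F_i:O_i\times O\to\mathbb{R}$. Assumption II.2: $\widetilde F_i(\cdot|\mathbf{y})$ is $\tau_i$-strongly convex on $X_i$ for all $\mathbf{y}\in X$ and differentiable on $O_i$ with $\nabla\widetilde F_i(\mathbf{y}_i|\mathbf{y})=\nabla_{\mathbf{y}_i}F(\mathbf{y})$ for all $\mathbf{y}\in X$. Assumption II.3: $\nabla\widetilde F_i(\mathbf{x}_i|\cdot)$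 is $\widetilde L_i$-Lipschitz on $X$ for all $\mathbf{x}_i\in X_i$. Assumption II.3*: $\widetilde F_i$ is continuous on $O_i\times O$. Best response $\widehat{\mathbf{x}}_i(\mathbf{x})\triangleq\operatorname{argmin}_{\mathbf{x}_i'\in X_i}\{\widetilde F_i(\mathbf{x}_i'|\mathbf{x})+G(\mathbf{x}_i',\mathbf{x}_{-i})\}$. FLEXA: given $\mathbf{x}^0\in X$, at iteration $k$ choose $S^k\subseteq N$; for each $i\in S^k$ compute $\mathbf{z}_i^k\in X_i$ with $\|\mathbf{z}_i^k-\widehat{\mathbf{x}}_i(\mathbf{x}^k)\|\le\varepsilon_i^k$; set $\widehat{\mathbf{z}}_i^k=\mathbf{z}_i^k$ for $i\in S^k$, $\widehat{\mathbf{z}}_i^k=\mathbf{x}_i^k$ for $i\notin S^k$; set $\mathbf{x}^{k+1}=\mathbf{x}^k+\gamma^k(\widehat{\mathbf{z}}^k-\mathbf{x}^k)$, $\gamma^k\in(0,1]$. Conditions: (i) each $\widetilde F_i$ satisfies Assumptions II.2–II.3 or II.2–II.3*; (ii) $S^k$ follows one of the rules: essentially cyclic (finite $T$ with $\bigcup_{s=0}^{T-1}S^{k+s}=N$ for all $k$), greedy ($S^k$ contains $i$ with $E_i(\mathbf{x}^k)\ge\rho\max_jE_j(\mathbf{x}^k)$, $\rho\in(0,1]$, where $\underline s_i\|\widehat{\mathbf{x}}_i(\mathbf{x}^k)-\mathbf{x}_i^k\|\le E_i(\mathbf{x}^k)\le\bar s_i\|\widehat{\mathbf{x}}_i(\mathbf{x}^k)-\mathbf{x}_i^k\|$,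 $0<\underline s_i\le\bar s_i<\infty$), or random-based ($S^k$ realizations of independent random sets with $\mathbb{P}(i\in\mathbf{S}^k)\ge p>0$); (iii) Assumption II.9: $\varepsilon_i^k\to0$ and $\widetilde F_i(\mathbf{z}_i^k|\mathbf{x}^k)+G(\mathbf{z}_i^k,\mathbf{x}_{-i}^k)\le\widetilde F_i(\mathbf{x}_i^k|\mathbf{x}^k)+G(\mathbf{x}^k)$; (iv) if $G$ is not block-separable, $\gamma^k\in(0,1/n]$ for all $k$. Step-size rules with $c_\tau=\min_i\tau_i$: bounded — $0<\liminf\gamma^k\le\limsup\gamma^k<c_\tau/L$; diminishing — $\sum\gamma^k=\infty$, $\sum(\gamma^k)^2<\infty$ and, under the cyclic rule, $\eta_1\le\gamma^{k+1}/\gamma^k\le\eta_2$ for large $k$ ($\eta_1\in(0,1),\eta_2\ge1$); line search — with $\alpha,\delta\in(0,1)$, initial trial $\beta\in(0,1]$ ($\beta\le1/n$ if $G$ not block-separable), $\gamma^k=\beta\delta^{t_k}$, $t_k$ the smallest nonnegative integer with $V(\mathbf{x}^k+\gamma^k\Delta^k)\le V(\mathbf{x}^k)+\alpha\gamma^k(\nabla F(\mathbf{x}^k)^T\Delta^k+\sum_{i\in S^k}(G(\mathbf{z}_i^k,\mathbf{x}_{-i}^k)-G(\mathbf{x}^k)))$, $\Delta^k=\widehat{\mathbf{z}}^k-\mathbf{x}^k$. *)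

From Stdlib Require Import Reals Lra Lia List ClassicalEpsilon.
Open Scope R_scope.

(* Blocks are indexed 0..n-1 (the paper's N = {1,...,n}); block i lives
   in R^{m i}.  A block vector is a function nat -> R whose coordinates
   j >= m i are 0; a point of R^{m_1+...+m_n} is a function nat -> Blk
   (block i, coordinate j) whose entries outside the range are 0.     *)
Definition Blk := nat -> R.
Definition Pt := nat -> Blk.

Fixpoint rsum (k : nat) (f : nat -> R) : R :=
  match k with O => 0 | S k' => rsum k' f + f k' end.

Fixpoint rmaxn (k : nat) (f : nat -> R) : R :=
  match k with O => f O | S k' => Rmax (rmaxn k' f) (f k) end.
Fixpoint rminn (k : nat) (f : nat -> R) : R :=
  match k with O => f O | S k' => Rmin (rminn k' f) (f k) end.

Definition blk_ok (mi : nat) (v : Blk) : Prop :=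
  forall j, (mi <= j)%nat -> v j = 0.
Definition pt_ok (n : nat) (m : nat -> nat) (x : Pt) : Prop :=
  forall i j, (n <= i \/ m i <= j)%nat -> x i j = 0.

Definition bsub (u v : Blk) : Blk := fun j => u j - v j.
Definition psub (x y : Pt) : Pt := fun i j => x i j - y i j.
Definition bcomb (t : R) (u v : Blk) : Blk := fun j => t * u j + (1 - t) * v j.
Definition pcomb (t : R) (x y : Pt) : Pt := fun i j => t * x i j + (1 - t) * y i j.
Definition pstep (x : Pt) (g : R) (d : Pt) : Pt := fun i j => x i j + g * d i j.
(* (u, x_{-i}) : replace block i of x by u *)
Definition upd (x : Pt) (i : nat) (u : Blk) : Pt :=
  fun l => if Nat.eqb l i then u else x l.

Definition blk_norm2 (mi : nat) (v : Blk) : R := rsum mi (fun j => v j ^ 2).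
Definition blk_norm (mi : nat) (v : Blk) : R := sqrt (blk_norm2 mi v).
Definition blk_inner (mi : nat) (u v : Blk) : R := rsum mi (fun j => u j * v j).
Definition pt_norm2 (n : nat) (m : nat -> nat) (x : Pt) : R :=
  rsum n (fun i => blk_norm2 (m i) (x i)).
Definition pt_norm (n : nat) (m : nat -> nat) (x : Pt) : R := sqrt (pt_norm2 n m x).
Definition pt_inner (n : nat) (m : nat -> nat) (x y : Pt) : R :=
  rsum n (fun i => blk_inner (m i) (x i) (y i)).

Definition blk_closed (mi : nat) (A : Blk -> Prop) : Prop :=
  forall v, blk_ok mi v ->
    (forall e, 0 < e -> exists u, A u /\ blk_norm mi (bsub u v) < e) -> A v.
Definition blk_convex (A : Blk -> Prop) : Prop :=
  forall u v t, A u -> A v -> 0 <= t <= 1 -> A (bcomb t u v).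
Definition blk_open (mi : nat) (A : Blk -> Prop) : Prop :=
  forall v, A v -> blk_ok mi v /\
    exists d, 0 < d /\ forall u, blk_ok mi u -> blk_norm mi (bsub u v) < d -> A u.

Definition prodset (n : nat) (m : nat -> nat) (A : nat -> Blk -> Prop) : Pt -> Prop :=
  fun x => pt_ok n m x /\ forall i, (i < n)%nat -> A i (x i).

(* convex function on a (not necessarily convex) domain: the inequality on
   every segment contained in the domain *)
Definition convex_on_pt (A : Pt -> Prop) (f : Pt -> R) : Prop :=
  forall x y t, A x -> A y -> 0 <= t <= 1 -> A (pcomb t x y) ->
    f (pcomb t x y) <= t * f x + (1 - t) * f y.
Definition convex_on_blk (A : Blk -> Prop) (f : Blk -> R) : Prop :=
  forall u v t, A u -> A v -> 0 <= t <= 1 -> A (bcomb t u v) ->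
    f (bcomb t u v) <= t * f u + (1 - t) * f v.
Definition strongly_convex_on (mi : nat) (A : Blk -> Prop) (f : Blk -> R) (tau : R) : Prop :=
  forall u v t, A u -> A v -> 0 <= t <= 1 ->
    f (bcomb t u v) <= t * f u + (1 - t) * f v
                       - tau / 2 * t * (1 - t) * blk_norm2 mi (bsub u v).

Definition has_grad_at (n : nat) (m : nat -> nat) (F : Pt -> R) (g : Pt) (x : Pt) : Prop :=
  pt_ok n m g /\
  forall e, 0 < e -> exists d, 0 < d /\ forall y, pt_ok n m y ->
    pt_norm n m (psub y x) < d ->
    Rabs (F y - F x - pt_inner n m g (psub y x)) <= e * pt_norm n m (psub y x).
Definition has_bgrad_at (mi : nat) (f : Blk -> R) (g : Blk) (u : Blk) : Prop :=
  blk_ok mi g /\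
  forall e, 0 < e -> exists d, 0 < d /\ forall v, blk_ok mi v ->
    blk_norm mi (bsub v u) < d ->
    Rabs (f v - f u - blk_inner mi g (bsub v u)) <= e * blk_norm mi (bsub v u).

Definition C1_on (n : nat) (m : nat -> nat) (O : Pt -> Prop) (F : Pt -> R) (gradF : Pt -> Pt) : Prop :=
  (forall x, O x -> has_grad_at n m F (gradF x) x) /\
  (forall x, O x -> forall e, 0 < e -> exists d, 0 < d /\ forall y, O y ->
     pt_norm n m (psub y x) < d -> pt_norm n m (psub (gradF y) (gradF x)) < e).

Definition block_sep (n : nat) (m : nat -> nat) (Ob : nat -> Blk -> Prop) (G : Pt -> R) : Prop :=
  exists g : nat -> Blk -> R,
    (forall i, (i < n)%nat -> convex_on_blk (Ob i) (g i)) /\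
    (forall x, prodset n m Ob x -> G x = rsum n (fun i => g i (x i))).

Definition problem_setting (n : nat) (m : nat -> nat) (Xb Ob : nat -> Blk -> Prop)
    (F G : Pt -> R) (gradF : Pt -> Pt) (L : R) : Prop :=
  (0 < n)%nat /\
  (forall i, (i < n)%nat ->
     (exists u, Xb i u) /\ (forall u, Xb i u -> blk_ok (m i) u) /\
     blk_closed (m i) (Xb i) /\ blk_convex (Xb i)) /\
  (forall i, (i < n)%nat -> blk_open (m i) (Ob i) /\ (forall u, Xb i u -> Ob i u)) /\
  C1_on n m (prodset n m Ob) F gradF /\
  0 < L /\
  (forall x y, prodset n m Xb x -> prodset n m Xb y ->
     pt_norm n m (psub (gradF x) (gradF y)) <= L * pt_norm n m (psub x y)) /\
  convex_on_pt (prodset n m Ob) G /\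
  (exists b, forall x, prodset n m Xb x -> b <= F x + G x).

Definition assum_II2 (n : nat) (m : nat -> nat) (Xb Ob : nat -> Blk -> Prop)
    (gradF : Pt -> Pt) (Ft : nat -> Blk -> Pt -> R) (gradFt : nat -> Blk -> Pt -> Blk)
    (tau : nat -> R) (i : nat) : Prop :=
  0 < tau i /\
  forall y, prodset n m Xb y ->
    strongly_convex_on (m i) (Xb i) (fun u => Ft i u y) (tau i) /\
    (forall u, Ob i u -> has_bgrad_at (m i) (fun u' => Ft i u' y) (gradFt i u y) u) /\
    gradFt i (y i) y = gradF y i.

Definition assum_II3 (n : nat) (m : nat -> nat) (Xb : nat -> Blk -> Prop)
    (gradFt : nat -> Blk -> Pt -> Blk) (i : nat) : Prop :=
  exists Lt, 0 <= Lt /\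
    forall u, Xb i u -> forall y y', prodset n m Xb y -> prodset n m Xb y' ->
      blk_norm (m i) (bsub (gradFt i u y) (gradFt i u y')) <= Lt * pt_norm n m (psub y y').

Definition assum_II3star (n : nat) (m : nat -> nat) (Ob : nat -> Blk -> Prop)
    (Ft : nat -> Blk -> Pt -> R) (i : nat) : Prop :=
  forall u y, Ob i u -> prodset n m Ob y ->
    forall e, 0 < e -> exists d, 0 < d /\ forall u' y', Ob i u' -> prodset n m Ob y' ->
      blk_norm (m i) (bsub u' u) < d -> pt_norm n m (psub y' y) < d ->
      Rabs (Ft i u' y' - Ft i u y) < e.

Definition is_best_response (Xb : nat -> Blk -> Prop) (Ft : nat -> Blk -> Pt -> R)
    (G : Pt -> R) (i : nat) (x : Pt) (w : Blk) : Prop :=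
  Xb i w /\ forall w', Xb i w' -> Ft i w x + G (upd x i w) <= Ft i w' x + G (upd x i w').
Definition xhat (Xb : nat -> Blk -> Prop) (Ft : nat -> Blk -> Pt -> R)
    (G : Pt -> R) (i : nat) (x : Pt) : Blk :=
  epsilon (inhabits (fun _ : nat => 0)) (is_best_response Xb Ft G i x).

Definition zhat (Sel : nat -> nat -> bool) (x : nat -> Pt) (z : nat -> nat -> Blk) (k : nat) : Pt :=
  fun i => if Sel k i then z k i else x k i.

(* One FLEXA run: iterates x, inexact best responses z (z k i = z_i^k),
   selections Sel (Sel k i = true iff i in S^k), step sizes gamma,
   tolerances eps (eps k i = eps_i^k); includes Assumption II.9. *)
Definition flexa_run (n : nat) (m : nat -> nat) (Xb : nat -> Blk -> Prop)
    (Ft : nat -> Blk -> Pt -> R) (G : Pt -> R) (eps : nat -> nat -> R)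
    (x : nat -> Pt) (z : nat -> nat -> Blk) (Sel : nat -> nat -> bool) (gamma : nat -> R) : Prop :=
  prodset n m Xb (x O) /\
  (forall k i, Sel k i = true -> (i < n)%nat) /\
  (forall k i, (i < n)%nat -> Sel k i = true ->
     Xb i (z k i) /\ blk_norm (m i) (bsub (z k i) (xhat Xb Ft G i (x k))) <= eps k i) /\
  (forall k, 0 < gamma k <= 1) /\
  (forall k i j, x (S k) i j = x k i j + gamma k * (zhat Sel x z k i j - x k i j)) /\
  (* Assumption II.9 *)
  (forall i, (i < n)%nat -> Un_cv (fun k => eps k i) 0) /\
  (forall k i, (i < n)%nat -> Sel k i = true ->
     Ft i (z k i) (x k) + G (upd (x k) i (z k i)) <= Ft i (x k i) (x k) + G (x k)).

Definition rule_cyclic (n : nat) (Sel : nat -> nat -> bool) : Prop :=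
  exists T, (0 < T)%nat /\
    forall k i, (i < n)%nat -> exists s, (s < T)%nat /\ Sel (k + s)%nat i = true.

Definition rule_greedy (n : nat) (m : nat -> nat) (Xb : nat -> Blk -> Prop)
    (Ft : nat -> Blk -> Pt -> R) (G : Pt -> R) (x : nat -> Pt) (Sel : nat -> nat -> bool) : Prop :=
  exists (rho : R) (E : nat -> Pt -> R) (slo shi : nat -> R),
    0 < rho <= 1 /\ (forall i, (i < n)%nat -> 0 < slo i <= shi i) /\
    forall k,
      (forall i, (i < n)%nat ->
         slo i * blk_norm (m i) (bsub (xhat Xb Ft G i (x k)) (x k i)) <= E i (x k) /\
         E i (x k) <= shi i * blk_norm (m i) (bsub (xhat Xb Ft G i (x k)) (x k i))) /\
      exists i, (i < n)%nat /\ Sel k i = true /\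
        rho * rmaxn (n - 1) (fun j => E j (x k)) <= E i (x k).

Record prob_space (Omega : Type) := mkProbSpace {
  ev : (Omega -> Prop) -> Prop;
  prob : (Omega -> Prop) -> R;
  ev_ext : forall A B, (forall w, A w <-> B w) -> ev A -> ev B;
  prob_ext : forall A B, (forall w, A w <-> B w) -> prob A = prob B;
  ev_full : ev (fun _ => True);
  ev_compl : forall A, ev A -> ev (fun w => ~ A w);
  ev_union : forall A : nat -> Omega -> Prop, (forall k, ev (A k)) -> ev (fun w => exists k, A k w);
  prob_nonneg : forall A, ev A -> 0 <= prob A;
  prob_full : prob (fun _ => True) = 1;
  prob_sigma_add : forall A : nat -> Omega -> Prop, (forall k, ev (A k)) ->
    (forall k l w, k <> l -> A k w -> A l w -> False) ->
    infinite_sum (fun k => prob (A k)) (prob (fun w => exists k, A k w))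
}.
Arguments ev {Omega} p _.
Arguments prob {Omega} p _.

Definition almost_surely {Omega : Type} (PS : prob_space Omega) (Q : Omega -> Prop) : Prop :=
  exists E, ev PS E /\ prob PS E = 1 /\ forall w, E w -> Q w.

Definition sel_pattern (n : nat) (s : nat -> bool) (A : nat -> bool) : Prop :=
  forall i, (i < n)%nat -> s i = A i.

(* Random-based rule: S^k independent random subsets of N with
   P(i in S^k) >= p > 0; the only randomness in FLEXA is that of the S^k
   (x^0 deterministic; z^k and gamma^k are determined by S^0,...,S^k). *)
Definition rule_random {Omega : Type} (n : nat) (PS : prob_space Omega)
    (x : Omega -> nat -> Pt) (z : Omega -> nat -> nat -> Blk)
    (Sel : Omega -> nat -> nat -> bool) (gamma : Omega -> nat -> R) : Prop :=
  (forall k A, ev PS (fun w => sel_pattern n (Sel w k) A)) /\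
  (forall l : list (nat * (nat -> bool)), NoDup (map fst l) ->
     prob PS (fun w => Forall (fun kA => sel_pattern n (Sel w (fst kA)) (snd kA)) l) =
     fold_right Rmult 1
       (map (fun kA => prob PS (fun w => sel_pattern n (Sel w (fst kA)) (snd kA))) l)) /\
  (exists p, 0 < p /\ forall k i, (i < n)%nat ->
     ev PS (fun w => Sel w k i = true) /\ p <= prob PS (fun w => Sel w k i = true)) /\
  (forall w w', x w O = x w' O) /\
  (forall k w w', (forall j i, (j <= k)%nat -> Sel w j i = Sel w' j i) ->
     z w k = z w' k /\ gamma w k = gamma w' k).

Definition c_tau (n : nat) (tau : nat -> R) : R := rminn (n - 1) tau.

(* 0 < liminf gamma^k <= limsup gamma^k < c_tau / L *)
Definition step_bounded (n : nat) (tau : nat -> R) (L : R) (gamma : nat -> R) : Prop :=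
  exists a b, 0 < a /\ b < c_tau n tau / L /\
    exists K, forall k, (K <= k)%nat -> a <= gamma k <= b.

Definition step_diminishing (gamma : nat -> R) : Prop :=
  (forall M, exists N, M < rsum N gamma) /\
  (exists l, infinite_sum (fun k => gamma k ^ 2) l).
Definition step_ratio (gamma : nat -> R) : Prop :=
  exists e1 e2, 0 < e1 < 1 /\ 1 <= e2 /\
    exists K, forall k, (K <= k)%nat -> e1 <= gamma (S k) / gamma k <= e2.

Definition armijo (n : nat) (m : nat -> nat) (F G : Pt -> R) (gradF : Pt -> Pt)
    (Sel : nat -> nat -> bool) (x : nat -> Pt) (z : nat -> nat -> Blk)
    (alpha : R) (k : nat) (g : R) : Prop :=
  F (pstep (x k) g (psub (zhat Sel x z k) (x k)))
    + G (pstep (x k) g (psub (zhat Sel x z k) (x k)))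
  <= F (x k) + G (x k)
     + alpha * g * (pt_inner n m (gradF (x k)) (psub (zhat Sel x z k) (x k))
                    + rsum n (fun i => if Sel k i then G (upd (x k) i (z k i)) - G (x k) else 0)).

Definition step_linesearch (n : nat) (m : nat -> nat) (Ob : nat -> Blk -> Prop)
    (F G : Pt -> R) (gradF : Pt -> Pt)
    (Sel : nat -> nat -> bool) (x : nat -> Pt) (z : nat -> nat -> Blk) (gamma : nat -> R) : Prop :=
  exists alpha delta beta, 0 < alpha < 1 /\ 0 < delta < 1 /\ 0 < beta <= 1 /\
    (~ block_sep n m Ob G -> beta <= / INR n) /\
    forall k, exists t : nat, gamma k = beta * delta ^ t /\
      armijo n m F G gradF Sel x z alpha k (gamma k) /\
      forall t', (t' < t)%nat -> ~ armijo n m F G gradF Sel x z alpha k (beta * delta ^ t').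

Definition cond_iv (n : nat) (m : nat -> nat) (Ob : nat -> Blk -> Prop) (G : Pt -> R)
    (gamma : nat -> R) : Prop :=
  ~ block_sep n m Ob G -> forall k, gamma k <= / INR n.

Definition flexa_conclusion (n : nat) (m : nat -> nat) (x : nat -> Pt) (z : nat -> nat -> Blk)
    (Sel : nat -> nat -> bool) (gamma : nat -> R) : Prop :=
  (exists l, infinite_sum (fun k => gamma k * pt_norm2 n m (psub (zhat Sel x z k) (x k))) l) /\
  Un_cv (fun k => pt_norm n m (psub (x (S k)) (x k))) 0.

(* Both conclusions hold along every sample path, so the "almost surely"
   qualifier is witnessed by the sure event.  Fix one run, put
   d^k = zhat^k - x^k (so x^{k+1} = x^k + gamma^k d^k), c = min_i tau_i and
   V = F + G.  The argument has three ingredients.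
   1. First-order strong convexity of the surrogates, the gradient
      consistency of Assumption II.2 and the descent condition of
      Assumption II.9 give
        <grad F(x^k), d^k> + sum_{i in S^k} (G(z_i^k, x_{-i}^k) - G(x^k))
          <= - c/2 ||d^k||^2.
   2. The descent lemma for the L-Lipschitz gradient of F, together with
      convexity of G along the step (blockwise when G is separable, by
      Jensen's inequality over the n single-block moves when gamma^k <= 1/n),
      gives V(x^{k+1}) <= V(x^k) - gamma^k (c - L gamma^k)/2 ||d^k||^2; the
      Armijo rule gives a decrease of the same form directly.
   3. Each step-size rule turns this into an eventual sufficient decrease
      kappa gamma^k ||d^k||^2 <= V(x^k) - V(x^{k+1}) with kappa > 0; as V is
      bounded below the series (a) converges, and its terms dominate
      ||x^{k+1} - x^k||^2 = (gamma^k)^2 ||d^k||^2, which gives (b). *)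

From Stdlib Require Import Reals Lra Lia FunctionalExtensionality Classical.
Open Scope R_scope.

Lemma rsum_ext k f g : (forall i, (i < k)%nat -> f i = g i) -> rsum k f = rsum k g.
Proof.
  induction k as [|k IH]; simpl; intros H; auto.
  rewrite IH by (intros; apply H; lia). rewrite H by lia. reflexivity.
Qed.

Lemma rsum_le k f g : (forall i, (i < k)%nat -> f i <= g i) -> rsum k f <= rsum k g.
Proof.
  induction k as [|k IH]; simpl; intros H; [lra|].
  assert (H1 := IH (fun i Hi => H i ltac:(lia))). specialize (H k ltac:(lia)). lra.
Qed.

Lemma rsum_plus k f g : rsum k (fun i => f i + g i) = rsum k f + rsum k g.
Proof. induction k as [|k IH]; simpl; [lra|]. rewrite IH. lra. Qed.

Lemma rsum_scal k c f : rsum k (fun i => c * f i) = c * rsum k f.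
Proof. induction k as [|k IH]; simpl; [lra|]. rewrite IH. lra. Qed.

Lemma rsum_minus k f g : rsum k (fun i => f i - g i) = rsum k f - rsum k g.
Proof. induction k as [|k IH]; simpl; [lra|]. rewrite IH. lra. Qed.

Lemma rsum_nonneg k f : (forall i, (i < k)%nat -> 0 <= f i) -> 0 <= rsum k f.
Proof.
  induction k as [|k IH]; simpl; intros H; [lra|].
  assert (H1 := IH (fun i Hi => H i ltac:(lia))). specialize (H k ltac:(lia)). lra.
Qed.

Lemma rsum_single k f g i0 : (i0 < k)%nat -> (forall i, i <> i0 -> f i = g i) ->
  rsum k f - rsum k g = f i0 - g i0.
Proof.
  induction k as [|k IH]; simpl; intros Hk H; [lia|].
  destruct (Nat.eq_dec k i0) as [->|Hne].
  - rewrite (rsum_ext i0 f g) by (intros; apply H; lia). lra.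
  - rewrite H by auto. specialize (IH ltac:(lia) H). lra.
Qed.

Lemma rminn_le k f i : (i <= k)%nat -> rminn k f <= f i.
Proof.
  induction k as [|k IH]; simpl; intros H.
  - replace i with O by lia. lra.
  - destruct (Nat.eq_dec i (S k)) as [->|Hne]; [apply Rmin_r|].
    eapply Rle_trans; [apply Rmin_l | apply IH; lia].
Qed.

Lemma rminn_pos k f : (forall i, (i <= k)%nat -> 0 < f i) -> 0 < rminn k f.
Proof.
  induction k as [|k IH]; simpl; intros H; [apply H; lia|].
  apply Rmin_glb_lt; [apply IH; intros; apply H; lia | apply H; lia].
Qed.

Lemma blk_norm2_nonneg mi v : 0 <= blk_norm2 mi v.
Proof. apply rsum_nonneg. intros. apply pow2_ge_0. Qed.

Lemma pt_norm2_nonneg n m v : 0 <= pt_norm2 n m v.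
Proof. apply rsum_nonneg. intros. apply blk_norm2_nonneg. Qed.

Lemma blk_norm2_scal mi u v c : (forall j, u j = c * v j) ->
  blk_norm2 mi u = c ^ 2 * blk_norm2 mi v.
Proof.
  intros H. unfold blk_norm2. rewrite <- rsum_scal.
  apply rsum_ext. intros. rewrite H. ring.
Qed.

Lemma pt_norm2_scal n m u v c : (forall i j, u i j = c * v i j) ->
  pt_norm2 n m u = c ^ 2 * pt_norm2 n m v.
Proof.
  intros H. unfold pt_norm2. rewrite <- rsum_scal.
  apply rsum_ext. intros. apply blk_norm2_scal; auto.
Qed.

Lemma blk_inner_scal mi g u v c : (forall j, u j = c * v j) ->
  blk_inner mi g u = c * blk_inner mi g v.
Proof.
  intros H. unfold blk_inner. rewrite <- rsum_scal.
  apply rsum_ext. intros. rewrite H. ring.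
Qed.

Lemma pt_inner_scal n m g u v c : (forall i j, u i j = c * v i j) ->
  pt_inner n m g u = c * pt_inner n m g v.
Proof.
  intros H. unfold pt_inner. rewrite <- rsum_scal.
  apply rsum_ext. intros. apply blk_inner_scal; auto.
Qed.

Lemma sqrt_scal c a : 0 <= a -> sqrt (c ^ 2 * a) = Rabs c * sqrt a.
Proof.
  intros Ha. rewrite sqrt_mult; [|apply pow2_ge_0|auto].
  f_equal. rewrite <- sqrt_Rsqr_abs. f_equal. unfold Rsqr. ring.
Qed.

Lemma blk_norm_scal mi u v c : (forall j, u j = c * v j) ->
  blk_norm mi u = Rabs c * blk_norm mi v.
Proof.
  intros H. unfold blk_norm. rewrite (blk_norm2_scal mi u v c H).
  apply sqrt_scal, blk_norm2_nonneg.
Qed.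

Lemma pt_norm_scal n m u v c : (forall i j, u i j = c * v i j) ->
  pt_norm n m u = Rabs c * pt_norm n m v.
Proof.
  intros H. unfold pt_norm. rewrite (pt_norm2_scal n m u v c H).
  apply sqrt_scal, pt_norm2_nonneg.
Qed.

Lemma pt_inner_minus n m a b d :
  pt_inner n m a d - pt_inner n m b d = pt_inner n m (psub a b) d.
Proof.
  unfold pt_inner. rewrite <- rsum_minus. apply rsum_ext; intros.
  unfold blk_inner. rewrite <- rsum_minus. apply rsum_ext; intros.
  unfold psub. ring.
Qed.

Lemma young n m a d s : 0 < s ->
  2 * pt_inner n m a d <= s * pt_norm2 n m a + / s * pt_norm2 n m d.
Proof.
  intros Hs. unfold pt_inner, pt_norm2.
  rewrite <- !rsum_scal, <- rsum_plus. apply rsum_le. intros i _.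
  unfold blk_inner, blk_norm2.
  rewrite <- !rsum_scal, <- rsum_plus. apply rsum_le. intros j _.
  assert (Hsq : 0 <= s * (a i j - / s * d i j) ^ 2)
    by (apply Rmult_le_pos; [lra | apply pow2_ge_0]).
  assert (s * (a i j - / s * d i j) ^ 2
          = s * a i j ^ 2 + / s * d i j ^ 2 - 2 * (a i j * d i j)) by (field; lra).
  lra.
Qed.

Lemma inner_le_of_norm_le n m a d M : 0 < M ->
  pt_norm n m a <= M * pt_norm n m d -> pt_inner n m a d <= M * pt_norm2 n m d.
Proof.
  intros HM Ha.
  assert (HN := pt_norm2_nonneg n m d).
  assert (Ha2 : pt_norm2 n m a <= M ^ 2 * pt_norm2 n m d).
  { apply sqrt_le_0; [apply pt_norm2_nonneg | nra |].
    rewrite sqrt_scal by exact HN. rewrite Rabs_right by lra. exact Ha. }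
  assert (Hy := young n m a d (/ M) ltac:(apply Rinv_0_lt_compat; lra)).
  rewrite Rinv_inv in Hy.
  assert (/ M * pt_norm2 n m a <= M * pt_norm2 n m d).
  { replace (M * pt_norm2 n m d) with (/ M * (M ^ 2 * pt_norm2 n m d)) by (field; lra).
    apply Rmult_le_compat_l; [left; apply Rinv_0_lt_compat; lra | exact Ha2]. }
  lra.
Qed.

Lemma pt_ok_psub n m a b : pt_ok n m a -> pt_ok n m b -> pt_ok n m (psub a b).
Proof. intros Ha Hb i j H. unfold psub. rewrite Ha, Hb by auto. ring. Qed.

Lemma pt_ok_pstep n m x t d : pt_ok n m x -> pt_ok n m d -> pt_ok n m (pstep x t d).
Proof. intros Hx Hd i j H. unfold pstep. rewrite Hx, Hd by auto. ring. Qed.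

Lemma pstep_pcomb a b t : pstep a t (psub b a) = pcomb t b a.
Proof.
  apply functional_extensionality; intro i; apply functional_extensionality; intro j.
  unfold pstep, pcomb, psub. ring.
Qed.

Lemma frechet_line n m F g x d c : has_grad_at n m F g (pstep x c d) ->
  pt_ok n m x -> pt_ok n m d ->
  derivable_pt_lim (fun t => F (pstep x t d)) c (pt_inner n m g d).
Proof.
  intros [_ Hg] Hx Hd eps Heps.
  set (N := pt_norm n m d). assert (HN : 0 <= N) by apply sqrt_pos.
  destruct (Hg (eps / 2 / (N + 1))) as [dl [Hdl H]]; [apply Rdiv_lt_0_compat; lra|].
  assert (Hp : 0 < dl / (N + 1)) by (apply Rdiv_lt_0_compat; lra).
  exists (mkposreal _ Hp). simpl. intros h Hh0 Hh.
  assert (Hps : forall i j, psub (pstep x (c + h) d) (pstep x c d) i j = h * d i j)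
    by (intros; unfold psub, pstep; ring).
  assert (Hnorm := pt_norm_scal n m _ _ h Hps). fold N in Hnorm.
  assert (Hin := pt_inner_scal n m g _ _ h Hps).
  assert (Hah : 0 < Rabs h) by (apply Rabs_pos_lt; auto).
  assert (HlN : Rabs h * N < dl).
  { apply Rmult_lt_compat_r with (r := N + 1) in Hh; [|lra].
    replace (dl / (N + 1) * (N + 1)) with dl in Hh by (field; lra). nra. }
  specialize (H (pstep x (c + h) d) (pt_ok_pstep _ _ _ _ _ Hx Hd)
                ltac:(rewrite Hnorm; exact HlN)).
  rewrite Hnorm, Hin in H.
  replace ((F (pstep x (c + h) d) - F (pstep x c d)) / h - pt_inner n m g d)
    with ((F (pstep x (c + h) d) - F (pstep x c d) - h * pt_inner n m g d) / h)
    by (field; auto).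
  unfold Rdiv at 1. rewrite Rabs_mult, Rabs_inv.
  apply Rle_lt_trans with (eps / 2 / (N + 1) * (Rabs h * N) * / Rabs h).
  { apply Rmult_le_compat_r; [left; apply Rinv_0_lt_compat; auto | auto]. }
  replace (eps / 2 / (N + 1) * (Rabs h * N) * / Rabs h)
    with (eps / 2 * (N / (N + 1))) by (field; lra).
  assert (N / (N + 1) < 1).
  { apply Rmult_lt_reg_r with (N + 1); [lra|].
    replace (N / (N + 1) * (N + 1)) with N by (field; lra). lra. }
  nra.
Qed.

(* Descent lemma: on a convex set PX where grad F is L-Lipschitz,
   F y <= F x + <grad F(x), y - x> + L/2 ||y - x||^2.
   Proof: mean value theorem for t |-> F(x + t(y-x)) - (A t + L/2 ||y-x||^2 t^2). *)
Lemma descent_lemma n m (PX PO : Pt -> Prop) F gradF L x y :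
  (forall a, PX a -> PO a) ->
  (forall a, PO a -> has_grad_at n m F (gradF a) a) ->
  0 < L ->
  (forall a b, PX a -> PX b ->
     pt_norm n m (psub (gradF a) (gradF b)) <= L * pt_norm n m (psub a b)) ->
  (forall a b t, PX a -> PX b -> 0 <= t <= 1 -> PX (pstep a t (psub b a))) ->
  (forall a, PX a -> pt_ok n m a) ->
  PX x -> PX y ->
  F y <= F x + pt_inner n m (gradF x) (psub y x) + L / 2 * pt_norm2 n m (psub y x).
Proof.
  intros HXO Hg HL HLip Hconv Hok Hx Hy.
  set (d := psub y x). set (A := pt_inner n m (gradF x) d).
  set (N2 := pt_norm2 n m d). set (K := L / 2 * N2).
  assert (Hd : pt_ok n m d) by (apply pt_ok_psub; auto).
  destruct (MVT_cor2 (fun t => F (pstep x t d) - (A * t + K * t ^ 2))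
              (fun t => pt_inner n m (gradF (pstep x t d)) d
                        - (A * 1 + K * (INR 2 * t ^ Init.Nat.pred 2))) 0 1 ltac:(lra))
    as [c [Hmvt Hc]].
  { intros c Hc.
    apply (derivable_pt_lim_minus (fun t => F (pstep x t d)) (fun t => A * t + K * t ^ 2)).
    - apply frechet_line; auto. apply Hg, HXO, Hconv; auto.
    - apply (derivable_pt_lim_plus (fun t => A * t) (fun t => K * t ^ 2)).
      + apply (derivable_pt_lim_scal id). apply derivable_pt_lim_id.
      + apply (derivable_pt_lim_scal (fun t => t ^ 2)). apply derivable_pt_lim_pow. }
  assert (E1 : pstep x 1 d = y).
  { apply functional_extensionality; intro i; apply functional_extensionality; intro j.
    unfold pstep, d, psub. ring. }
  assert (E0 : pstep x 0 d = x).
  { apply functional_extensionality; intro i; apply functional_extensionality; intro j.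
    unfold pstep. ring. }
  rewrite E1, E0 in Hmvt. simpl in Hmvt.
  assert (Hgap : pt_inner n m (gradF (pstep x c d)) d - A <= L * c * N2).
  { unfold A. rewrite pt_inner_minus. apply inner_le_of_norm_le; [nra|].
    eapply Rle_trans; [apply HLip; auto; apply Hconv; auto; lra|].
    rewrite (pt_norm_scal n m _ d c) by (intros; unfold psub, pstep; ring).
    rewrite Rabs_right by lra. right; ring. }
  unfold K in *. lra.
Qed.

Lemma bgrad_segment mi f g u v eta : has_bgrad_at mi f g u ->
  blk_ok mi u -> blk_ok mi v -> 0 < eta ->
  exists delta, 0 < delta /\ forall t, 0 < t <= delta ->
    t * blk_inner mi g (bsub v u) - t * eta <= f (bcomb t v u) - f u.
Proof.
  intros [_ Hg] Hu Hv Heta.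
  set (M := blk_norm mi (bsub v u)). assert (HM : 0 <= M) by apply sqrt_pos.
  destruct (Hg (eta / (M + 1))) as [dl [Hdl H]]; [apply Rdiv_lt_0_compat; lra|].
  exists (dl / (M + 1)). split; [apply Rdiv_lt_0_compat; lra|]. intros t Ht.
  assert (Hw : forall j, bsub (bcomb t v u) u j = t * bsub v u j)
    by (intros; unfold bsub, bcomb; ring).
  assert (Hnw := blk_norm_scal mi _ _ t Hw). rewrite Rabs_right in Hnw by lra. fold M in Hnw.
  assert (Hok : blk_ok mi (bcomb t v u))
    by (intros j Hj; unfold bcomb; rewrite Hu, Hv by auto; ring).
  assert (HtM : t * (M + 1) <= dl).
  { destruct Ht as [_ Ht]. apply Rmult_le_compat_r with (r := M + 1) in Ht; [|lra].
    replace (dl / (M + 1) * (M + 1)) with dl in Ht by (field; lra). exact Ht. }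
  specialize (H _ Hok ltac:(rewrite Hnw; nra)).
  rewrite Hnw, (blk_inner_scal mi g _ _ t Hw) in H.
  assert (Herr : eta / (M + 1) * (t * M) <= t * eta).
  { replace (eta / (M + 1) * (t * M)) with (t * eta * (M / (M + 1))) by (field; lra).
    assert (M / (M + 1) <= 1).
    { apply Rmult_le_reg_r with (M + 1); [lra|].
      replace (M / (M + 1) * (M + 1)) with M by (field; lra). lra. }
    assert (0 < t * eta) by nra. nra. }
  assert (Hlo := Rle_abs (- (f (bcomb t v u) - f u - t * blk_inner mi g (bsub v u)))).
  rewrite Rabs_Ropp in Hlo. lra.
Qed.

Lemma strongly_convex_grad mi (A : Blk -> Prop) f tau g u v : 0 <= tau ->
  strongly_convex_on mi A f tau -> A u -> A v -> has_bgrad_at mi f g u ->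
  blk_ok mi u -> blk_ok mi v ->
  blk_inner mi g (bsub v u) <= f v - f u - tau / 2 * blk_norm2 mi (bsub v u).
Proof.
  intros Htau Hsc Hu Hv Hg Hou Hov.
  apply Rle_plus_epsilon. intros eta Heta.
  set (N := blk_norm2 mi (bsub v u)). set (I := blk_inner mi g (bsub v u)).
  assert (HN : 0 <= N) by apply blk_norm2_nonneg.
  destruct (bgrad_segment mi f g u v (eta / 2) Hg Hou Hov ltac:(lra)) as [dl [Hdl Hseg]].
  set (t := Rmin (1 / 2) (Rmin dl (eta / (tau * N + 1)))).
  assert (Ht0 : 0 < t).
  { apply Rmin_pos; [lra|]. apply Rmin_pos; [lra | apply Rdiv_lt_0_compat; nra]. }
  assert (Ht1 : t <= 1 / 2) by apply Rmin_l.
  assert (Ht2 : t <= dl) by (eapply Rle_trans; [apply Rmin_r | apply Rmin_l]).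
  assert (Ht3 : t <= eta / (tau * N + 1)) by (eapply Rle_trans; [apply Rmin_r | apply Rmin_r]).
  specialize (Hseg t ltac:(lra)). fold I in Hseg.
  specialize (Hsc v u t Hv Hu ltac:(lra)). fold N in Hsc.
  (* dividing the two estimates by t leaves an error tau/2 t N <= eta/2 *)
  assert (Hsmall : tau / 2 * t * N <= eta / 2).
  { apply Rmult_le_compat_r with (r := tau * N + 1) in Ht3; [|nra].
    replace (eta / (tau * N + 1) * (tau * N + 1)) with eta in Ht3 by (field; nra). nra. }
  assert (Hkey : t * I <= t * (f v - f u - tau / 2 * N + tau / 2 * t * N + eta / 2)) by nra.
  apply Rmult_le_reg_l in Hkey; [lra | exact Ht0].
Qed.

Section StepConvexity.
Variables (n : nat) (m : nat -> nat) (Xb Ob : nat -> Blk -> Prop).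
Hypothesis HXb : forall i, (i < n)%nat ->
  (forall u, Xb i u -> blk_ok (m i) u) /\ blk_convex (Xb i) /\ (forall u, Xb i u -> Ob i u).

Lemma prodset_sub_open a : prodset n m Xb a -> prodset n m Ob a.
Proof. intros [Ha1 Ha2]. split; auto. intros i Hi. apply (HXb i Hi). auto. Qed.

Lemma prodset_convex a b t : prodset n m Xb a -> prodset n m Xb b -> 0 <= t <= 1 ->
  prodset n m Xb (pcomb t a b).
Proof.
  intros [Ha1 Ha2] [Hb1 Hb2] Ht. split.
  - intros i j H. unfold pcomb. rewrite Ha1, Hb1 by auto. ring.
  - intros i Hi. apply (HXb i Hi); auto.
Qed.

Lemma upd_feasible x i u : prodset n m Xb x -> (i < n)%nat -> Xb i u ->
  prodset n m Xb (upd x i u).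
Proof.
  intros [Hx1 Hx2] Hi Hu. split.
  - intros l j H. unfold upd. destruct (Nat.eqb_spec l i) as [->|]; auto.
    destruct H; [lia|]. apply (HXb i Hi); auto.
  - intros l Hl. unfold upd. destruct (Nat.eqb_spec l i) as [->|]; auto.
Qed.

(* A step x + gam (v - x), where v replaces the selected blocks of x by
   feasible blocks zz_i, satisfies G(x + gam (v - x)) <= G x + gam sum_i del_i
   with del_i = G(zz_i, x_{-i}) - G x for the selected i: blockwise when G is
   separable, and by Jensen's inequality when gam <= 1/n. *)
Variables (G : Pt -> R) (x : Pt) (Sl : nat -> bool) (zz : nat -> Blk) (gam : R).
Hypothesis Hx : prodset n m Xb x.
Hypothesis HS : forall i, Sl i = true -> (i < n)%nat /\ Xb i (zz i).
Let v : Pt := fun i => if Sl i then zz i else x i.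
Let d : Pt := psub v x.
Let del (i : nat) : R := if Sl i then G (upd x i (zz i)) - G x else 0.

Lemma target_feasible : prodset n m Xb v.
Proof.
  destruct Hx as [Hx1 Hx2]. split.
  - intros i j H. unfold v. destruct (Sl i) eqn:E; auto.
    destruct (HS i E). destruct H; [lia|]. apply (HXb i); auto.
  - intros i Hi. unfold v. destruct (Sl i) eqn:E; [apply HS|]; auto.
Qed.

Lemma G_step_separable : 0 <= gam <= 1 -> block_sep n m Ob G ->
  G (pstep x gam d) <= G x + gam * rsum n del.
Proof.
  intros Hg [g [Hgc HG]].
  assert (Hp : pstep x gam d = pcomb gam v x) by apply pstep_pcomb.
  assert (HpX : prodset n m Xb (pstep x gam d))
    by (rewrite Hp; apply prodset_convex; auto; apply target_feasible).
  rewrite (HG _ (prodset_sub_open _ HpX)), (HG _ (prodset_sub_open _ Hx)).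
  assert (Hdel : forall i, (i < n)%nat -> del i = g i (v i) - g i (x i)).
  { intros i Hi. unfold del, v. destruct (Sl i) eqn:E; [|ring].
    destruct (HS i E) as [_ Hz].
    rewrite (HG _ (prodset_sub_open _ (upd_feasible x i _ Hx Hi Hz))),
            (HG _ (prodset_sub_open _ Hx)).
    rewrite (rsum_single n _ _ i Hi).
    - unfold upd. rewrite Nat.eqb_refl. auto.
    - intros l Hl. unfold upd. apply Nat.eqb_neq in Hl. rewrite Hl. auto. }
  rewrite (rsum_ext n del _ Hdel), rsum_minus.
  apply Rle_trans with (rsum n (fun i => gam * g i (v i) + (1 - gam) * g i (x i))).
  - apply rsum_le. intros i Hi. rewrite Hp.
    destruct target_feasible as [_ Hv]. destruct Hx as [_ Hx2].
    destruct (HXb i Hi) as [_ [_ HO]].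
    apply (Hgc i Hi); auto.
    apply HO, (proj2 (prodset_convex v x gam target_feasible Hx Hg)); auto.
  - rewrite rsum_plus, !rsum_scal. lra.
Qed.

Hypothesis HGc : convex_on_pt (prodset n m Ob) G.

(* The single-block move x + n gam d_k and the partial average
   x + (n gam / k) (d_0 + ... + d_{k-1}); the latter is the average of the
   first k single-block moves, and for k = n it is the FLEXA step. *)
Let block_move (k : nat) : Pt :=
  fun l j => x l j + INR n * gam * (if Nat.eqb l k then d l j else 0).
Let partial_average (k : nat) : Pt :=
  fun l j => x l j + (INR n * gam / INR k) * (if Nat.ltb l k then d l j else 0).

Lemma block_move_bound k : 0 < gam -> INR n * gam <= 1 -> (k < n)%nat ->
  prodset n m Xb (block_move k) /\ G (block_move k) <= G x + INR n * gam * del k.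
Proof.
  intros Hg0 Hg1 Hk. unfold del. destruct (Sl k) eqn:E.
  - destruct (HS k E) as [_ Hz].
    assert (HR : block_move k = pcomb (INR n * gam) (upd x k (zz k)) x).
    { apply functional_extensionality; intro l; apply functional_extensionality; intro j.
      unfold block_move, pcomb, upd, d, psub, v.
      destruct (Nat.eqb_spec l k) as [->|]; [rewrite E|]; ring. }
    assert (Hu := upd_feasible x k _ Hx Hk Hz).
    assert (Ht : 0 <= INR n * gam <= 1)
      by (split; [apply Rmult_le_pos; [apply pos_INR | lra] | lra]).
    rewrite HR. split; [apply prodset_convex; auto|].
    assert (H := HGc _ _ _ (prodset_sub_open _ Hu) (prodset_sub_open _ Hx) Ht
                  (prodset_sub_open _ (prodset_convex _ _ _ Hu Hx Ht))).
    lra.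
  - assert (HR : block_move k = x).
    { apply functional_extensionality; intro l; apply functional_extensionality; intro j.
      unfold block_move, d, psub, v.
      destruct (Nat.eqb_spec l k) as [->|]; [rewrite E|]; ring. }
    rewrite HR. split; auto. lra.
Qed.

Lemma partial_average_bound k : 0 < gam -> INR n * gam <= 1 -> (k <= n)%nat ->
  prodset n m Xb (partial_average k) /\
  INR k * G (partial_average k) <= INR k * G x + INR n * gam * rsum k del.
Proof.
  intros Hg0 Hg1. induction k as [|k IH]; intros Hk.
  - assert (HQ : partial_average 0 = x).
    { apply functional_extensionality; intro l; apply functional_extensionality; intro j.
      unfold partial_average. simpl. ring. }
    rewrite HQ. simpl. split; auto. lra.
  - destruct (IH ltac:(lia)) as [HQk HGk].
    destruct (block_move_bound k Hg0 Hg1 ltac:(lia)) as [HRk HGR].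
    assert (Hk0 : 0 <= INR k) by apply pos_INR.
    set (t := INR k / INR (S k)).
    assert (E2 : INR (S k) * t = INR k) by (unfold t; rewrite S_INR; field; lra).
    assert (E3 : INR (S k) * (1 - t) = 1) by (unfold t; rewrite S_INR; field; lra).
    assert (Ht : 0 <= t <= 1) by (rewrite S_INR in E2, E3; nra).
    assert (HQ : partial_average (S k) = pcomb t (partial_average k) (block_move k)).
    { apply functional_extensionality; intro l; apply functional_extensionality; intro j.
      unfold partial_average, block_move, pcomb, t. rewrite S_INR.
      destruct (Nat.ltb_spec l k), (Nat.ltb_spec l (S k)), (Nat.eqb_spec l k); try lia.
      - assert (0 < INR k) by (apply lt_0_INR; lia). field. lra.
      - subst. rewrite Rmult_0_r. field. lra.
      - rewrite !Rmult_0_r. field. lra. }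
    rewrite HQ. split; [apply prodset_convex; auto|].
    assert (H := HGc _ _ t (prodset_sub_open _ HQk) (prodset_sub_open _ HRk) Ht
                  (prodset_sub_open _ (prodset_convex _ _ _ HQk HRk Ht))).
    apply Rmult_le_compat_l with (r := INR (S k)) in H; [|lra].
    rewrite Rmult_plus_distr_l, <- !Rmult_assoc, E2, E3 in H.
    simpl rsum. rewrite S_INR in *. lra.
Qed.

Lemma G_step_jensen : (0 < n)%nat -> 0 < gam -> gam <= / INR n ->
  G (pstep x gam d) <= G x + gam * rsum n del.
Proof.
  intros Hn Hg0 Hg1.
  assert (Hn0 : 0 < INR n) by (apply lt_0_INR; lia).
  assert (Hg1' : INR n * gam <= 1).
  { apply Rmult_le_compat_l with (r := INR n) in Hg1; [|lra]. rewrite Rinv_r in Hg1; lra. }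
  destruct (partial_average_bound n Hg0 Hg1' ltac:(lia)) as [_ H].
  assert (HQ : partial_average n = pstep x gam d).
  { apply functional_extensionality; intro l; apply functional_extensionality; intro j.
    unfold partial_average, pstep. destruct (Nat.ltb_spec l n).
    - field. lra.
    - unfold d, psub, v. destruct (Sl l) eqn:E; [destruct (HS l E); lia | ring]. }
  rewrite HQ in H.
  apply Rmult_le_reg_l with (INR n); auto. lra.
Qed.
End StepConvexity.

Lemma summable_of_decrease (a V : nat -> R) b K kap :
  (forall k, 0 <= a k) -> (forall k, b <= V k) -> 0 < kap ->
  (forall k, (K <= k)%nat -> kap * a k <= V k - V (S k)) -> exists l, infinite_sum a l.
Proof.
  intros Ha HV Hk Hd.
  assert (Hgr : Un_growing (sum_f_R0 a)) by (intro N; simpl; specialize (Ha (S N)); lra).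
  assert (Htel : forall N, kap * sum_f_R0 a (K + N) <= kap * sum_f_R0 a K + V (S K) - V (S (K + N))).
  { induction N as [|N IH]; [rewrite Nat.add_0_r; lra|].
    replace (K + S N)%nat with (S (K + N)) by lia. simpl sum_f_R0.
    specialize (Hd (S (K + N)) ltac:(lia)). lra. }
  assert (Hub : has_ub (sum_f_R0 a)).
  { exists (sum_f_R0 a K + (V (S K) - b) / kap). intros y [N ->].
    assert (Hm : 0 <= (V (S K) - b) / kap).
    { unfold Rdiv. apply Rmult_le_pos; [specialize (HV (S K)); lra | left; apply Rinv_0_lt_compat; lra]. }
    destruct (Compare_dec.le_lt_dec K N).
    - replace N with (K + (N - K))%nat by lia. specialize (Htel (N - K)%nat).
      specialize (HV (S (K + (N - K)))).
      apply Rmult_le_reg_l with kap; auto. rewrite Rmult_plus_distr_l.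
      replace (kap * ((V (S K) - b) / kap)) with (V (S K) - b) by (field; lra). lra.
    - assert (sum_f_R0 a N <= sum_f_R0 a K) by (apply Rge_le, growing_prop; auto; lia).
      lra. }
  destruct (growing_cv _ Hgr Hub) as [l Hl]. exists l. intros eps He.
  destruct (Hl eps He) as [N HN]. exists N. intros k Hk'. apply HN. auto.
Qed.

Lemma series_terms_vanish a l : infinite_sum a l ->
  forall eps, 0 < eps -> exists N, forall k, (N <= k)%nat -> Rabs (a k) < eps.
Proof.
  intros H eps He. destruct (H (eps / 2) ltac:(lra)) as [N HN]. exists (S N). intros k Hk.
  destruct k as [|k]; [lia|].
  assert (H1 := HN k ltac:(lia)). assert (H2 := HN (S k) ltac:(lia)).
  unfold Rdist in *. simpl in H2.
  replace (a (S k)) with ((sum_f_R0 a k + a (S k) - l) - (sum_f_R0 a k - l)) by ring.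
  eapply Rle_lt_trans; [apply Rabs_triang|]. rewrite Rabs_Ropp. lra.
Qed.

Section FlexaRun.
Variables (n : nat) (m : nat -> nat) (Xb Ob : nat -> Blk -> Prop)
  (F G : Pt -> R) (gradF : Pt -> Pt) (L : R)
  (Ft : nat -> Blk -> Pt -> R) (gradFt : nat -> Blk -> Pt -> Blk) (tau : nat -> R)
  (eps : nat -> nat -> R) (x : nat -> Pt) (z : nat -> nat -> Blk)
  (Sel : nat -> nat -> bool) (gamma : nat -> R).
Hypothesis Hps : problem_setting n m Xb Ob F G gradF L.
Hypothesis HII2 : forall i, (i < n)%nat -> assum_II2 n m Xb Ob gradF Ft gradFt tau i.
Hypothesis Hrun : flexa_run n m Xb Ft G eps x z Sel gamma.

Let dir (k : nat) : Pt := psub (zhat Sel x z k) (x k).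
Let gain (k i : nat) : R := if Sel k i then G (upd (x k) i (z k i)) - G (x k) else 0.
Let c : R := c_tau n tau.
Let V (k : nat) : R := F (x k) + G (x k).

Lemma run_blocks i : (i < n)%nat ->
  (forall u, Xb i u -> blk_ok (m i) u) /\ blk_convex (Xb i) /\ (forall u, Xb i u -> Ob i u).
Proof.
  intros Hi. destruct Hps as [_ [HXi [HOi _]]].
  destruct (HXi i Hi) as [_ [H1 [_ H2]]]. destruct (HOi i Hi) as [_ H3]. auto.
Qed.

Lemma run_selected k i : Sel k i = true -> (i < n)%nat /\ Xb i (z k i).
Proof.
  intros E. destruct Hrun as [_ [HSn [Hz _]]].
  assert (Hi := HSn k i E). split; [exact Hi | apply (Hz k i Hi E)].
Qed.

Lemma run_gamma k : 0 < gamma k <= 1.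
Proof. destruct Hrun as [_ [_ [_ [Hg _]]]]. apply Hg. Qed.

Lemma run_step k : x (S k) = pstep (x k) (gamma k) (dir k).
Proof.
  destruct Hrun as [_ [_ [_ [_ [Hupd _]]]]].
  apply functional_extensionality; intro i; apply functional_extensionality; intro j.
  apply Hupd.
Qed.

Lemma run_feasible k : prodset n m Xb (x k).
Proof.
  induction k as [|k IH]; [apply Hrun|].
  rewrite run_step. unfold dir. rewrite pstep_pcomb.
  assert (Hg := run_gamma k).
  apply (prodset_convex n m Xb Ob run_blocks); [|auto | lra].
  apply (target_feasible n m Xb Ob run_blocks); auto. apply run_selected.
Qed.

Lemma c_tau_pos : 0 < c.
Proof. apply rminn_pos. intros i Hi. apply (HII2 i ltac:(destruct Hps; lia)). Qed.

Lemma surrogate_decrease k :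
  pt_inner n m (gradF (x k)) (dir k) + rsum n (gain k) <= - (c / 2) * pt_norm2 n m (dir k).
Proof.
  unfold pt_inner, pt_norm2. rewrite <- rsum_plus, <- rsum_scal.
  apply rsum_le. intros i Hi. unfold gain. destruct (Sel k i) eqn:E.
  - assert (Edi : dir k i = bsub (z k i) (x k i)).
    { apply functional_extensionality; intro j. unfold dir, psub, zhat, bsub. rewrite E. auto. }
    rewrite Edi.
    destruct (HII2 i Hi) as [Htau Hy]. destruct (Hy (x k) (run_feasible k)) as [Hsc [Hbg Hgeq]].
    destruct (run_feasible k) as [_ Hxi]. destruct (run_blocks i Hi) as [Hbo [_ HXO]].
    destruct (run_selected k i E) as [_ Hzi].
    assert (H1 := strongly_convex_grad (m i) (Xb i) (fun u => Ft i u (x k)) (tau i)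
                    (gradFt i (x k i) (x k)) (x k i) (z k i) ltac:(lra) Hsc (Hxi i Hi) Hzi
                    (Hbg _ (HXO _ (Hxi i Hi))) (Hbo _ (Hxi i Hi)) (Hbo _ Hzi)).
    rewrite Hgeq in H1. simpl in H1.
    (* Assumption II.9: the inexact best response does not increase the surrogate *)
    assert (H2 : Ft i (z k i) (x k) + G (upd (x k) i (z k i)) <= Ft i (x k i) (x k) + G (x k))
      by (apply Hrun; auto).
    assert (Hti : c <= tau i) by (apply rminn_le; lia).
    assert (HN := blk_norm2_nonneg (m i) (bsub (z k i) (x k i))).
    assert (c / 2 * blk_norm2 (m i) (bsub (z k i) (x k i))
            <= tau i / 2 * blk_norm2 (m i) (bsub (z k i) (x k i))) by nra.
    lra.
  - assert (Hz0 : forall j, dir k i j = 0 * dir k i j).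
    { intro j. unfold dir, psub, zhat. rewrite E. ring. }
    rewrite (blk_inner_scal _ _ _ _ 0 Hz0), (blk_norm2_scal _ _ _ 0 Hz0). lra.
Qed.

Lemma F_decrease k : F (x (S k)) <= F (x k) + gamma k * pt_inner n m (gradF (x k)) (dir k)
                                     + L / 2 * (gamma k ^ 2 * pt_norm2 n m (dir k)).
Proof.
  destruct Hps as [_ [_ [_ [[Hgrad _] [HL [HLip _]]]]]].
  assert (H := descent_lemma n m (prodset n m Xb) (prodset n m Ob) F gradF L (x k) (x (S k))
    (prodset_sub_open n m Xb Ob run_blocks) Hgrad HL HLip
    ltac:(intros a b0 t Ha Hb0 Ht; rewrite pstep_pcomb;
          apply (prodset_convex n m Xb Ob run_blocks); auto)
    ltac:(intros a [Ha _]; auto) (run_feasible k) (run_feasible (S k))).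
  assert (Hp : forall i j, psub (x (S k)) (x k) i j = gamma k * dir k i j).
  { intros i j. rewrite run_step. unfold psub at 1, pstep. ring. }
  rewrite (pt_inner_scal _ _ _ _ _ _ Hp), (pt_norm2_scal _ _ _ _ _ Hp) in H. lra.
Qed.

Lemma G_decrease k : block_sep n m Ob G \/ gamma k <= / INR n ->
  G (x (S k)) <= G (x k) + gamma k * rsum n (gain k).
Proof.
  intros Hor. rewrite run_step. assert (Hg := run_gamma k).
  destruct Hor as [Hsep | Hle].
  - apply (G_step_separable n m Xb Ob run_blocks G (x k) (Sel k) (z k) (gamma k));
      auto using run_feasible, run_selected; lra.
  - destruct Hps as [Hn [_ [_ [_ [_ [_ [HGc _]]]]]]].
    apply (G_step_jensen n m Xb Ob run_blocks G (x k) (Sel k) (z k) (gamma k));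
      auto using run_feasible, run_selected; lra.
Qed.

Lemma V_decrease k : block_sep n m Ob G \/ gamma k <= / INR n ->
  V (S k) <= V k - gamma k * (c - L * gamma k) / 2 * pt_norm2 n m (dir k).
Proof.
  intros Hor. assert (H1 := F_decrease k). assert (H2 := G_decrease k Hor).
  assert (H3 := surrogate_decrease k). assert (Hg := run_gamma k). unfold V.
  assert (gamma k * (pt_inner n m (gradF (x k)) (dir k) + rsum n (gain k))
          <= gamma k * (- (c / 2) * pt_norm2 n m (dir k)))
    by (apply Rmult_le_compat_l; lra).
  nra.
Qed.

Definition eventual_decrease : Prop :=
  exists K kap, 0 < kap /\ forall k, (K <= k)%nat ->
    kap * (gamma k * pt_norm2 n m (dir k)) <= V k - V (S k).

Lemma decrease_bounded : cond_iv n m Ob G gamma -> step_bounded n tau L gamma ->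
  eventual_decrease.
Proof.
  intros Hiv [a0 [b0 [Ha0 [Hb0 [K HK]]]]].
  assert (HL : 0 < L) by apply Hps.
  assert (HLb : L * b0 < c).
  { apply Rmult_lt_compat_l with (r := L) in Hb0; auto.
    replace (L * (c_tau n tau / L)) with c in Hb0 by (unfold c; field; lra). exact Hb0. }
  exists K, ((c - L * b0) / 2). split; [lra|]. intros k Hk. specialize (HK k Hk).
  assert (Hor : block_sep n m Ob G \/ gamma k <= / INR n)
    by (destruct (classic (block_sep n m Ob G)); auto).
  assert (H := V_decrease k Hor). assert (HN := pt_norm2_nonneg n m (dir k)).
  assert (Hg := run_gamma k).
  assert (gamma k * pt_norm2 n m (dir k) * (L * gamma k)
          <= gamma k * pt_norm2 n m (dir k) * (L * b0))
    by (apply Rmult_le_compat_l; [nra | apply Rmult_le_compat_l; lra]).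
  nra.
Qed.

Lemma decrease_linesearch : step_linesearch n m Ob F G gradF Sel x z gamma ->
  eventual_decrease.
Proof.
  intros [al [de [be [Hal [_ [_ [_ Hls]]]]]]].
  exists 0%nat, (al * (c / 2)). split; [apply Rmult_lt_0_compat; assert (Hc := c_tau_pos); lra|].
  intros k _. destruct (Hls k) as [t [_ [Harm _]]].
  unfold armijo in Harm. fold (dir k) in Harm. rewrite <- run_step in Harm.
  change (rsum n (fun i => if Sel k i then G (upd (x k) i (z k i)) - G (x k) else 0))
    with (rsum n (gain k)) in Harm.
  assert (H := surrogate_decrease k). assert (Hg := run_gamma k). unfold V.
  assert (al * gamma k * (pt_inner n m (gradF (x k)) (dir k) + rsum n (gain k))
          <= al * gamma k * (- (c / 2) * pt_norm2 n m (dir k)))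
    by (apply Rmult_le_compat_l; nra).
  nra.
Qed.

Lemma decrease_diminishing : step_diminishing gamma -> eventual_decrease.
Proof.
  intros [_ [l Hl]]. assert (Hc := c_tau_pos).
  assert (Hn : (0 < n)%nat) by apply Hps. assert (HL : 0 < L) by apply Hps.
  (* square-summability forces gamma^k <= min (c / 2L, 1/n) eventually *)
  set (e := Rmin (c / (2 * L)) (/ INR n)).
  assert (He : 0 < e).
  { apply Rmin_pos; [apply Rdiv_lt_0_compat; lra | apply Rinv_0_lt_compat, lt_0_INR; lia]. }
  destruct (series_terms_vanish _ _ Hl (e ^ 2) ltac:(nra)) as [K HK].
  exists K, (c / 4). split; [lra|]. intros k Hk. specialize (HK k Hk).
  assert (Hg := run_gamma k).
  assert (Hge : gamma k <= e).
  { rewrite Rabs_right in HK by (apply Rle_ge, pow2_ge_0).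
    destruct (Rle_lt_dec (gamma k) e); auto. nra. }
  assert (Hor : block_sep n m Ob G \/ gamma k <= / INR n)
    by (right; eapply Rle_trans; [exact Hge | apply Rmin_r]).
  assert (Hg2 : L * gamma k <= c / 2).
  { assert (H : gamma k <= c / (2 * L)) by (eapply Rle_trans; [exact Hge | apply Rmin_l]).
    apply Rmult_le_compat_l with (r := L) in H; [|lra].
    replace (L * (c / (2 * L))) with (c / 2) in H by (field; lra). exact H. }
  assert (H := V_decrease k Hor). assert (HN := pt_norm2_nonneg n m (dir k)).
  assert (gamma k * pt_norm2 n m (dir k) * (L * gamma k)
          <= gamma k * pt_norm2 n m (dir k) * (c / 2))
    by (apply Rmult_le_compat_l; nra).
  nra.
Qed.

(* Part (a) follows from the eventual decrease since V is bounded below,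
   and part (b) since ||x^{k+1} - x^k||^2 = (gamma^k)^2 ||d^k||^2 <= gamma^k ||d^k||^2. *)
Lemma run_conclusion : eventual_decrease -> flexa_conclusion n m x z Sel gamma.
Proof.
  intros [K [kap [Hkap HK]]].
  destruct Hps as [_ [_ [_ [_ [_ [_ [_ [b Hb]]]]]]]].
  assert (Ha : forall k, 0 <= gamma k * pt_norm2 n m (dir k)).
  { intro k. assert (Hg := run_gamma k). apply Rmult_le_pos; [lra | apply pt_norm2_nonneg]. }
  destruct (summable_of_decrease _ V b K kap Ha (fun k => Hb _ (run_feasible k)) Hkap HK)
    as [l Hl].
  split; [exists l; exact Hl|].
  intros e He. destruct (series_terms_vanish _ _ Hl (e ^ 2) ltac:(nra)) as [N HN].
  exists N. intros k Hk. specialize (HN k Hk). unfold Rdist. rewrite Rminus_0_r.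
  assert (Hp : forall i j, psub (x (S k)) (x k) i j = gamma k * dir k i j).
  { intros i j. rewrite run_step. unfold psub at 1, pstep. ring. }
  assert (Hg := run_gamma k). assert (HN2 := pt_norm2_nonneg n m (dir k)).
  rewrite (pt_norm_scal _ _ _ _ _ Hp), (Rabs_right (gamma k)) by lra.
  rewrite Rabs_right in HN by (apply Rle_ge, Ha).
  rewrite Rabs_right by (apply Rle_ge, Rmult_le_pos; [lra | apply sqrt_pos]).
  unfold pt_norm.
  replace (gamma k * sqrt (pt_norm2 n m (dir k))) with (sqrt (gamma k ^ 2 * pt_norm2 n m (dir k)))
    by (rewrite sqrt_scal by exact HN2; rewrite Rabs_right by lra; reflexivity).
  rewrite <- (sqrt_pow2 e) by lra.
  apply sqrt_lt_1_alt. split; [nra|].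
  assert (0 <= gamma k * pt_norm2 n m (dir k) * (1 - gamma k))
    by (apply Rmult_le_pos; [apply Ha | lra]).
  nra.
Qed.
End FlexaRun.

Theorem mainTheorem10
    (n : nat) (m : nat -> nat) (Xb Ob : nat -> Blk -> Prop)
    (F G : Pt -> R) (gradF : Pt -> Pt) (L : R)
    (Ft : nat -> Blk -> Pt -> R) (gradFt : nat -> Blk -> Pt -> Blk) (tau : nat -> R)
    (Omega : Type) (PS : prob_space Omega)
    (x : Omega -> nat -> Pt) (z : Omega -> nat -> nat -> Blk)
    (Sel : Omega -> nat -> nat -> bool) (gamma : Omega -> nat -> R)
    (eps : nat -> nat -> R) :
  problem_setting n m Xb Ob F G gradF L ->
  (* condition (i) *)
  (forall i, (i < n)%nat ->
     assum_II2 n m Xb Ob gradF Ft gradFt tau i /\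
     (assum_II3 n m Xb gradFt i \/ assum_II3star n m Ob Ft i)) ->
  (* FLEXA iterations, incl. condition (iii) = Assumption II.9 *)
  (forall w, flexa_run n m Xb Ft G eps (x w) (z w) (Sel w) (gamma w)) ->
  (* condition (ii) together with the step-size rule:
     setting (A) = (iv) + bounded or line search;
     setting (B) = diminishing (+ ratio condition under the cyclic rule) *)
  (let steps (cyc : bool) :=
     (forall w, cond_iv n m Ob G (gamma w) /\ step_bounded n tau L (gamma w)) \/
     (forall w, cond_iv n m Ob G (gamma w) /\
                step_linesearch n m Ob F G gradF (Sel w) (x w) (z w) (gamma w)) \/
     (forall w, step_diminishing (gamma w) /\ (cyc = true -> step_ratio (gamma w))) in
   ((forall w, rule_cyclic n (Sel w)) /\ steps true) \/
   ((forall w, rule_greedy n m Xb Ft G (x w) (Sel w)) /\ steps false) \/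
   (rule_random n PS x z Sel gamma /\ steps false)) ->
  almost_surely PS (fun w => flexa_conclusion n m (x w) (z w) (Sel w) (gamma w)).
Proof.
  intros Hps Hi Hrun Hsel.
  assert (HII2 : forall i, (i < n)%nat -> assum_II2 n m Xb Ob gradF Ft gradFt tau i)
    by (intros i Hi0; apply (Hi i Hi0)).
  (* the conclusion holds on every sample path, hence on the sure event *)
  exists (fun _ => True). split; [apply ev_full|]. split; [apply prob_full|].
  intros w _. apply (run_conclusion n m Xb Ob F G gradF L Ft eps); auto.
  cbv zeta in Hsel.
  destruct Hsel as [[_ Hs] | [[_ Hs] | [_ Hs]]]; destruct Hs as [Hs | [Hs | Hs]];
    destruct (Hs w);
    first [ now eapply decrease_bounded; eauto | now eapply decrease_linesearch; eauto
          | now eapply decrease_diminishing; eauto ].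
Qed.
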